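(* Let $(\bar x,\bar y)\in\mathbb{R}^2$, $n\ge 3$, and $a_k,b_k\in\mathbb{R}$ with $a_k^2+b_k^2\ne0$ for $k=1,\dots,n$, defining lines $l^k:=\{(x,y): a_k(x-\bar x)+b_k(y-\bar y)-1=0\}$ (none passes through $(\bar x,\bar y)$). Assume $$a_ib_{i^\oplus}-b_ia_{i^\oplus}>0\quad\text{for all } i\in\{1,\dots,n\},$$ and $$-a_k(b_i-b_j)+b_k(a_i-a_j)-(a_ib_j-b_ia_j)<0\quad\text{for all } i\in\{1,\dots,n\},\ j=i^{\oplus},\ k\in\{1,\dots,n\}\setminus\{i,j\}.$$ Let $S:=\{(x,y): a_k(x-\bar x)+b_k(y-\bar y)-1\le0\text{ for all }k\}$. Then the boundary of $S$ is an enclosed, non-degenerate, $n$-sided convex polygon containing $(\bar x,\bar y)$ in its interior, namely the closed polygon formed by the sequence $(V_{12},V_{23},\dots,V_{(n-1)n},V_{n1},V_{12})$ with $V_{ii^\oplus}:=l^i\cap l^{i^\oplus}$, whose $n$ vertices are pairwise distinct with no three cyclically consecutive ones collinear.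
   Context: For $i\in\{1,\dots,n\}$, $i^{\oplus}:=i+1$ if $i\le n-1$ and $n^{\oplus}:=1$. *)

From HB Require Import structures.
From mathcomp Require Import all_boot all_order all_algebra.
From mathcomp Require Import all_classical all_reals all_analysis.
Set Implicit Arguments. Unset Strict Implicit. Unset Printing Implicit Defensive.
Import Order.TTheory GRing.Theory Num.Theory.
Import numFieldNormedType.Exports.
Local Open Scope classical_set_scope.
Local Open Scope ring_scope.

(* cyclic successor i^⊕ on indices {0,..,n-1} (0-based version of {1,..,n}) *)
Definition succ n (i : 'I_n) : 'I_n := ordS i.

Definition line (R : realType) (xb yb ak bk : R) : set (R * R) :=
  [set p | ak * (p.1 - xb) + bk * (p.2 - yb) - 1 = 0].

Definition Sreg (R : realType) n (xb yb : R) (a b : 'I_n -> R) : set (R * R) :=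
  [set p | forall k, a k * (p.1 - xb) + b k * (p.2 - yb) - 1 <= 0].

Definition boundary (T : topologicalType) (A : set T) : set T :=
  closure A `\` interior A.

Definition segment (R : realType) (p q : R * R) : set (R * R) :=
  [set r | exists2 t : R, 0 <= t <= 1 &
     r = ((1 - t) * p.1 + t * q.1, (1 - t) * p.2 + t * q.2)].

Definition collinear (R : realType) (p q r : R * R) : Prop :=
  (q.1 - p.1) * (r.2 - p.2) - (q.2 - p.2) * (r.1 - p.1) = 0.

Definition convex_plane (R : realType) (A : set (R * R)) : Prop :=
  forall p q, A p -> A q -> segment p q `<=` A.

Definition bounded_plane (R : realType) (A : set (R * R)) : Prop :=
  exists M : R, forall p, A p -> `|p.1| <= M /\ `|p.2| <= M.

From HB Require Import structures.
From mathcomp Require Import all_boot all_order all_algebra.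
From mathcomp Require Import all_classical all_reals all_analysis.
From mathcomp Require Import ring lra zify.
Import Order.TTheory GRing.Theory Num.Theory.
Import numFieldNormedType.Exports.
Local Open Scope classical_set_scope.
Local Open Scope ring_scope.

(* The vertex V_i = l^i ∩ l^(i+) is given by Cramer's rule, the determinant
   a_i b_(i+) - b_i a_(i+) being positive; the corner inequalities say exactly that
   V_i lies strictly inside every other half-plane.  S is closed and convex, and
   its boundary consists of the points of S lying on some line l^k.  Along l^k the
   neighbouring constraints k-1 and k+1 vanish at V_(k-1) and V_k respectively and are
   negative at the other end, which cuts l^k ∩ S down to the edge [V_(k-1), V_k].
   Boundedness: the corner inequalities yield positive weights under which the normals
   (a_k, b_k) sum to zero, so each form a_k (x - xb) + b_k (y - yb), bounded above by 1
   on S, is also bounded below there; two independent forms then bound x and y. *)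

Lemma val_succ {n} (i : 'I_n) : (succ i : nat) = if (i.+1 < n)%N then i.+1 else 0%N.
Proof.
rewrite /= /ordS /=; case: ltnP => h; first by rewrite modn_small.
have -> : i.+1 = n by have := ltn_ord i; lia.
by rewrite modnn.
Qed.

Lemma succ_neq {n} (i : 'I_n) : (1 < n)%N -> succ i != i.
Proof.
by move=> n1; apply/eqP => /(congr1 (@nat_of_ord _)); rewrite val_succ; case: ifP; lia.
Qed.

Lemma succ2_neq {n} (i : 'I_n) : (2 < n)%N -> succ (succ i) != i.
Proof.
move=> n2; apply/eqP => /(congr1 (@nat_of_ord _)); rewrite !val_succ.
by have := ltn_ord i; case: (ltnP i.+1 n) => ?; case: ifP; lia.
Qed.

Lemma cramer2 {R : comPzRingType} (al0 be0 al1 be1 u v : R) :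
  (al0 * be1 - be0 * al1) * u = be1 * (al0 * u + be0 * v) - be0 * (al1 * u + be1 * v) /\
  (al0 * be1 - be0 * al1) * v = al0 * (al1 * u + be1 * v) - al1 * (al0 * u + be0 * v).
Proof. by split; ring. Qed.

Definition line_form {R : realType} (x0 y0 al be : R) (p : R * R) : R :=
  al * (p.1 - x0) + be * (p.2 - y0) - 1.

Section LineForm.
Context {R : realType} {x0 y0 al be : R}.
Local Notation f := (line_form x0 y0 al be).

Lemma continuous_line_form : continuous f.
Proof.
move=> p; apply: cvgB; last exact: cvg_cst.
apply: cvgD; apply: cvgM; try exact: cvg_cst.
- apply: cvgB; [exact: cvg_fst | exact: cvg_cst].
- apply: cvgB; [exact: cvg_snd | exact: cvg_cst].
Qed.

Lemma line_form_lt0_nbhs p : f p < 0 -> nbhs p [set q | f q < 0].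
Proof.
move=> fp; apply: open_nbhs_nbhs; split => //.
apply: (@open_comp _ _ f [set x | x < 0]) => [q _|]; last exact: open_lt.
exact: continuous_line_form.
Qed.

Lemma closed_line_form_le0 : closed [set q | f q <= 0].
Proof.
apply: (@preimage_closed _ _ f [set x | x <= 0]) => [q _|]; last exact: closed_le.
exact: continuous_line_form.
Qed.

Lemma line_form_eq0_not_nbhs p : al ^+ 2 + be ^+ 2 != 0 -> f p = 0 ->
  ~ nbhs p [set q | f q <= 0].
Proof.
move=> nz fp0 /nbhs_ballP[r /= r0 hr].
have nz0 : 0 < al ^+ 2 + be ^+ 2 by rewrite lt0r nz addr_ge0 ?sqr_ge0.
(* Moving from p along the normal (al, be) leaves the half-plane at once. *)
pose t := r / (2 * (1 + `|al| + `|be|)).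
have c0 : 0 < 1 + `|al| + `|be| by rewrite -addrA ltr_pwDl ?addr_ge0.
have t0 : 0 < t by rewrite divr_gt0 ?mulr_gt0.
have tc : t * (1 + `|al| + `|be|) < r.
  have -> : t * (1 + `|al| + `|be|) = r / 2 by rewrite /t; field; rewrite gt_eqF.
  lra.
have : f (p.1 + t * al, p.2 + t * be) <= 0.
  apply: hr; split => /=;
    rewrite /ball /= opprD addrA subrr sub0r normrN normrM gtr0_norm //.
  - apply: le_lt_trans tc; rewrite ler_pM2l //; have := normr_ge0 be; lra.
  - apply: le_lt_trans tc; rewrite ler_pM2l //; have := normr_ge0 al; lra.
have -> : f (p.1 + t * al, p.2 + t * be) = f p + t * (al ^+ 2 + be ^+ 2).
  by rewrite /line_form /=; ring.
by rewrite fp0 add0r leNgt mulr_gt0.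
Qed.

Lemma line_form_segment (p q : R * R) t :
  f ((1 - t) * p.1 + t * q.1, (1 - t) * p.2 + t * q.2) = (1 - t) * f p + t * f q.
Proof. by rewrite /line_form /=; ring. Qed.

Lemma line_form_collinear {p q r : R * R} :
  p <> q -> f q = f p -> collinear p q r -> f r = f p.
Proof.
rewrite /collinear => pq fqp col.
have e1 : (f r - f p) * (q.1 - p.1) = (f q - f p) * (r.1 - p.1)
    + be * ((q.1 - p.1) * (r.2 - p.2) - (q.2 - p.2) * (r.1 - p.1)).
  by rewrite /line_form; ring.
have e2 : (f r - f p) * (q.2 - p.2) = (f q - f p) * (r.2 - p.2)
    - al * ((q.1 - p.1) * (r.2 - p.2) - (q.2 - p.2) * (r.1 - p.1)).
  by rewrite /line_form; ring.
rewrite fqp col subrr mul0r mulr0 addr0 in e1.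
rewrite fqp col subrr mul0r mulr0 subr0 in e2.
move/eqP: e1; rewrite mulf_eq0 !subr_eq0 => /orP[/eqP //|/eqP e1].
move/eqP: e2; rewrite mulf_eq0 !subr_eq0 => /orP[/eqP //|/eqP e2].
by exfalso; apply: pq; rewrite [p]surjective_pairing [q]surjective_pairing e1 e2.
Qed.

Lemma line_form_inj2 {al' be' : R} {p q : R * R} : al * be' - be * al' != 0 ->
  f p = f q -> line_form x0 y0 al' be' p = line_form x0 y0 al' be' q -> p = q.
Proof.
move=> det fpq fpq'.
have lin al'' be'' : line_form x0 y0 al'' be'' p = line_form x0 y0 al'' be'' q ->
    al'' * (p.1 - q.1) + be'' * (p.2 - q.2) = 0.
  move=> e; have -> : al'' * (p.1 - q.1) + be'' * (p.2 - q.2) =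
    line_form x0 y0 al'' be'' p - line_form x0 y0 al'' be'' q by rewrite /line_form; ring.
  by rewrite e subrr.
have [eu ev] := cramer2 al be al' be' (p.1 - q.1) (p.2 - q.2).
rewrite (lin _ _ fpq) (lin _ _ fpq') !mulr0 subrr in eu ev.
move/eqP: eu; rewrite mulf_eq0 (negbTE det) subr_eq0 => /eqP e1.
move/eqP: ev; rewrite mulf_eq0 (negbTE det) subr_eq0 => /eqP e2.
by rewrite [p]surjective_pairing [q]surjective_pairing e1 e2.
Qed.

End LineForm.

Section HalfplaneIntersection.
Context {R : realType} {n : nat} {xb yb : R} {a b : 'I_n -> R}.
Local Notation f k := (line_form xb yb (a k) (b k)).
Local Notation S := (Sreg xb yb a b).

Lemma closed_Sreg : closed S.
Proof.
move=> p clSp k; apply: closed_line_form_le0 => B /clSp[q [Sq Bq]].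
by exists q; split => //; exact: Sq k.
Qed.

Lemma convex_Sreg : convex_plane S.
Proof.
move=> p q Sp Sq r [t /andP[t0 t1] ->] k.
have := @line_form_segment _ xb yb (a k) (b k) p q t; rewrite /line_form /= => ->.
by have := Sp k; have := Sq k; nra.
Qed.

Lemma Sreg_nbhs p : (forall k, f k p < 0) -> nbhs p S.
Proof.
move=> fp; have := filter_forall (nbhs_filter p) (fun k => line_form_lt0_nbhs p (fp k)).
by apply: filterS => q fq k; exact/ltW/fq.
Qed.

Lemma Sreg_center_interior : interior S (xb, yb).
Proof.
by apply: Sreg_nbhs => k; rewrite /line_form /= !subrr !mulr0 addr0 sub0r oppr_lt0.
Qed.

Lemma boundary_SregP p : (forall k, a k ^+ 2 + b k ^+ 2 != 0) ->
  boundary S p <-> S p /\ exists k, f k p = 0.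
Proof.
move=> nz; split.
- move=> [/closed_Sreg Sp notint]; split => //; apply: contrapT => nok.
  apply: notint; apply: Sreg_nbhs => k; rewrite lt_neqAle Sp andbT.
  by apply/eqP => fk0; apply: nok; exists k.
- move=> [Sp [k fk0]]; split; first exact: subset_closure.
  move=> /(filterS (fun q (Sq : S q) => Sq k)).
  exact: line_form_eq0_not_nbhs p (nz k) fk0.
Qed.

Lemma Sreg_form_bounded (c : 'I_n -> R) p k :
  (forall l, 0 < c l) -> \sum_l c l * a l = 0 -> \sum_l c l * b l = 0 -> S p ->
  `|a k * (p.1 - xb) + b k * (p.2 - yb)| <= 1 + (\sum_l c l) / c k.
Proof.
move=> c_gt0 suma sumb Sp.
pose s l := a l * (p.1 - xb) + b l * (p.2 - yb).
have s_le1 l : s l <= 1 by have := Sp l; rewrite /line_form -/(s l); lra.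
have sum_s : \sum_l c l * (1 - s l) = \sum_l c l.
  rewrite -[RHS]subr0 -[X in _ - X](_ : \sum_l c l * s l = 0).
    by rewrite -sumrB; apply: eq_bigr => l _; ring.
  rewrite /s; under eq_bigr => l _ do rewrite mulrDr !mulrA.
  by rewrite big_split /= -!mulr_suml suma sumb !mul0r addr0.
have : c k * (1 - s k) <= \sum_l c l.
  rewrite -sum_s (bigD1 k) //= lerDl; apply: sumr_ge0 => l _.
  by apply: mulr_ge0; [exact: ltW | rewrite subr_ge0].
rewrite -ler_pdivlMl // => hk; rewrite ler_norml; apply/andP; split.
- have := s_le1 k; rewrite /s in hk *; lra.
- have C0 : 0 <= \sum_l c l by apply: sumr_ge0 => l _; exact: ltW.
  have := divr_ge0 C0 (ltW (c_gt0 k)); have := s_le1 k; rewrite /s; lra.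
Qed.

Lemma bounded_Sreg {c : 'I_n -> R} {i j : 'I_n} :
  (forall l, 0 < c l) -> \sum_l c l * a l = 0 -> \sum_l c l * b l = 0 ->
  a i * b j - b i * a j != 0 -> bounded_plane S.
Proof.
move=> c_gt0 suma sumb det.
set Ti := 1 + (\sum_l c l) / c i; set Tj := 1 + (\sum_l c l) / c j.
set d := `|a i * b j - b i * a j|.
have d_gt0 : 0 < d by rewrite normr_gt0.
set Mu := (`|b j| * Ti + `|b i| * Tj) / d; set Mv := (`|a i| * Tj + `|a j| * Ti) / d.
exists (`|xb| + `|yb| + Mu + Mv) => p Sp.
have si := Sreg_form_bounded c p i c_gt0 suma sumb Sp.
have sj := Sreg_form_bounded c p j c_gt0 suma sumb Sp.
have [eu ev] := cramer2 (a i) (b i) (a j) (b j) (p.1 - xb) (p.2 - yb).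
have hu : `|p.1 - xb| <= Mu.
  rewrite /Mu ler_pdivlMr // mulrC /d -normrM eu.
  by apply: le_trans (ler_normB _ _) _; rewrite !normrM; apply: lerD; apply: ler_wpM2l.
have hv : `|p.2 - yb| <= Mv.
  rewrite /Mv ler_pdivlMr // mulrC /d -normrM ev.
  by apply: le_trans (ler_normB _ _) _; rewrite !normrM; apply: lerD; apply: ler_wpM2l.
have e1 : `|p.1| <= `|xb| + `|p.1 - xb| by rewrite -[X in `|X|](subrKC xb) ler_normD.
have e2 : `|p.2| <= `|yb| + `|p.2 - yb| by rewrite -[X in `|X|](subrKC yb) ler_normD.
have := normr_ge0 xb; have := normr_ge0 yb; have := normr_ge0 (p.1 - xb).
have := normr_ge0 (p.2 - yb); split; lra.
Qed.

End HalfplaneIntersection.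

Lemma sum_succB {V : zmodType} {n} (G : 'I_n -> V) : \sum_j (G (succ j) - G j) = 0.
Proof. by rewrite sumrB [X in _ - X](reindex_inj (@ordS_inj n)) subrr. Qed.

Lemma corner_weightE {F : fieldType} (a0 b0 a1 b1 a2 b2 : F) :
  let d01 := a0 * b1 - b0 * a1 in let d12 := a1 * b2 - b1 * a2 in
  let w := - (- a2 * (b0 - b1) + b2 * (a0 - a1) - d01) / (d01 * d12) in
  d01 != 0 -> d12 != 0 ->
  w * a1 = (a1 - a2) / d12 - (a0 - a1) / d01 /\
  w * b1 = (b1 - b2) / d12 - (b0 - b1) / d01.
Proof.
by move=> d01 d12 w nz01 nz12; split; rewrite /w /d01 /d12; field; rewrite nz01 nz12.
Qed.

Section Polygon.
Context {R : realType} {n : nat} {xb yb : R} {a b : 'I_n -> R}.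
Hypothesis n_ge3 : (3 <= n)%N.
Hypothesis det_gt0 : forall i, 0 < a i * b (succ i) - b i * a (succ i).
Hypothesis corner_lt0 : forall i k, k != i -> k != succ i ->
  - a k * (b i - b (succ i)) + b k * (a i - a (succ i))
    - (a i * b (succ i) - b i * a (succ i)) < 0.
Local Notation f k := (line_form xb yb (a k) (b k)).
Local Notation D i := (a i * b (succ i) - b i * a (succ i)).
Local Notation S := (Sreg xb yb a b).

Definition vertex i : R * R :=
  (xb + (b (succ i) - b i) / D i, yb + (a i - a (succ i)) / D i).

Let D_neq0 i : D i != 0. Proof. by rewrite gt_eqF. Qed.
Let n_gt1 : (1 < n)%N. Proof. exact: leq_trans n_ge3. Qed.

Lemma line_form_vertex k i : f k (vertex i) * D i =
  - a k * (b i - b (succ i)) + b k * (a i - a (succ i)) - D i.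
Proof. by rewrite /line_form /vertex /=; field. Qed.

Lemma vertex_on_line i : f i (vertex i) = 0.
Proof.
apply/eqP; rewrite -(mulIr_eq0 _ (mulIf (D_neq0 i))) line_form_vertex.
by apply/eqP; ring.
Qed.

Lemma vertex_on_succ_line i : f (succ i) (vertex i) = 0.
Proof.
apply/eqP; rewrite -(mulIr_eq0 _ (mulIf (D_neq0 i))) line_form_vertex.
by apply/eqP; ring.
Qed.

Lemma line_form_vertex_lt0 {k i : 'I_n} :
  k != i -> k != succ i -> f k (vertex i) < 0.
Proof.
by move=> ki kSi; have := corner_lt0 i k ki kSi; rewrite -line_form_vertex pmulr_llt0.
Qed.

Lemma Sreg_vertex i : S (vertex i).
Proof.
move=> k; change (f k (vertex i) <= 0).
have [->|ki] := eqVneq k i; first by rewrite vertex_on_line.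
have [->|kSi] := eqVneq k (succ i); first by rewrite vertex_on_succ_line.
exact/ltW/line_form_vertex_lt0.
Qed.

Lemma lines_meet_at_vertex i :
  line xb yb (a i) (b i) `&` line xb yb (a (succ i)) (b (succ i)) = [set vertex i].
Proof.
apply/seteqP; split => [p [fp0 fSp0]|p ->]; last first.
  by split; [exact: vertex_on_line | exact: vertex_on_succ_line].
apply: (line_form_inj2 (x0 := xb) (y0 := yb) (D_neq0 i)).
  by rewrite vertex_on_line; exact: fp0.
by rewrite vertex_on_succ_line; exact: fSp0.
Qed.

Lemma vertex_inj : injective vertex.
Proof.
move=> i j eij; apply/eqP; apply: contraT; rewrite eq_sym => ij.
have [jSi|jNSi] := eqVneq j (succ i).
- have Sj_i : succ j != i by rewrite jSi succ2_neq.
  have Sj_Si : succ j != succ i by rewrite -jSi succ_neq.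
  by have := line_form_vertex_lt0 Sj_i Sj_Si; rewrite eij vertex_on_succ_line ltxx.
- by have := line_form_vertex_lt0 ij jNSi; rewrite eij vertex_on_line ltxx.
Qed.

Lemma vertex_not_collinear i :
  ~ collinear (vertex i) (vertex (succ i)) (vertex (succ (succ i))).
Proof.
move=> col.
have neq : vertex i <> vertex (succ i).
  by move/vertex_inj/eqP; rewrite eq_sym (negbTE (succ_neq i n_gt1)).
have f0 : f (succ i) (vertex (succ (succ i))) = 0.
  rewrite -(vertex_on_succ_line i); apply: line_form_collinear neq _ col.
  by rewrite vertex_on_line vertex_on_succ_line.
have Si_SSi : succ i != succ (succ i) by rewrite eq_sym succ_neq.
have Si_SSSi : succ i != succ (succ (succ i)) by rewrite eq_sym succ2_neq.
by have := line_form_vertex_lt0 Si_SSi Si_SSSi; rewrite f0 ltxx.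
Qed.

Lemma Sreg_edge_segment i p : S p -> f (succ i) p = 0 ->
  segment (vertex i) (vertex (succ i)) p.
Proof.
move=> Sp fp0.
have i_Si : i != succ i by rewrite eq_sym succ_neq.
have SSi_i : succ (succ i) != i by rewrite succ2_neq.
have SSi_Si : succ (succ i) != succ i by rewrite succ_neq.
have fi_lt0 : f i (vertex (succ i)) < 0.
  by apply: line_form_vertex_lt0; rewrite // eq_sym.
have fSSi_lt0 := line_form_vertex_lt0 SSi_i SSi_Si.
(* Constraint i vanishes at vertex i, so it fixes the position t of p on the edge;
   constraint succ (succ i) vanishes at vertex (succ i) and gives t <= 1. *)
pose t := f i p / f i (vertex (succ i)).
have ep : p = ((1 - t) * (vertex i).1 + t * (vertex (succ i)).1,
               (1 - t) * (vertex i).2 + t * (vertex (succ i)).2).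
  apply: (line_form_inj2 (x0 := xb) (y0 := yb) (D_neq0 i)).
    by rewrite line_form_segment vertex_on_line mulr0 add0r /t divfK ?lt_eqF.
  by rewrite line_form_segment fp0 vertex_on_succ_line vertex_on_line !mulr0 addr0.
exists t => //; apply/andP; split.
  by apply: mulr_le0; [exact: (Sp i) | rewrite invr_le0 ltW].
have : f (succ (succ i)) p <= 0 := Sp _.
by rewrite {1}ep line_form_segment vertex_on_succ_line mulr0 addr0; nra.
Qed.

Lemma boundary_Sreg_polygon : (forall k, a k ^+ 2 + b k ^+ 2 != 0) ->
  boundary S = \bigcup_(i in [set: 'I_n]) segment (vertex i) (vertex (succ i)).
Proof.
move=> nz; apply/seteqP; split => p.
  move/(boundary_SregP p nz) => [Sp [k fk0]]; exists (ord_pred k) => //.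
  by apply: Sreg_edge_segment; rewrite // /succ ord_predK.
move=> [i _ seg]; apply/(boundary_SregP p nz); split.
  exact: convex_Sreg (Sreg_vertex i) (Sreg_vertex (succ i)) _ seg.
exists (succ i); case: seg => t _ ->.
by rewrite line_form_segment vertex_on_succ_line vertex_on_line !mulr0 addr0.
Qed.

Lemma polygon_normals_balanced : exists2 c : 'I_n -> R,
  (forall l, 0 < c l) & \sum_l c l * a l = 0 /\ \sum_l c l * b l = 0.
Proof.
(* Weight of the normal of line succ j; it is positive by the corner inequality at
   vertex j against line succ (succ j), and corner_weightE makes the sums telescope. *)
pose w j := - (- a (succ (succ j)) * (b j - b (succ j))
               + b (succ (succ j)) * (a j - a (succ j)) - D j) / (D j * D (succ j)).
have wE j := corner_weightE (a j) (b j) (a (succ j)) (b (succ j))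
  (a (succ (succ j))) (b (succ (succ j))) (D_neq0 j) (D_neq0 (succ j)).
have reindex (F : 'I_n -> R) :
    \sum_l w (ord_pred l) * F l = \sum_j w j * F (succ j).
  by rewrite (reindex_inj (@ordS_inj n)); apply: eq_bigr => j _; rewrite ordSK.
exists (fun l => w (ord_pred l)).
  move=> l; rewrite /w divr_gt0 ?mulr_gt0 // oppr_gt0.
  by apply: corner_lt0; rewrite ?succ2_neq ?succ_neq.
split; rewrite reindex.
  rewrite (eq_bigr _ (fun j _ => (wE j).1)).
  exact: sum_succB (fun j => (a j - a (succ j)) / D j).
rewrite (eq_bigr _ (fun j _ => (wE j).2)).
exact: sum_succB (fun j => (b j - b (succ j)) / D j).
Qed.

Lemma bounded_Sreg_polygon : bounded_plane S.
Proof.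
have [c c_gt0 [suma sumb]] := polygon_normals_balanced.
pose i0 : 'I_n := Ordinal (leq_trans (isT : (0 < 3)%N) n_ge3).
exact: bounded_Sreg c_gt0 suma sumb (D_neq0 i0).
Qed.
End Polygon.

Arguments vertex {R n} xb yb a b i.

Theorem corollary1 (R : realType) (n : nat) (xb yb : R) (a b : 'I_n -> R) :
  (3 <= n)%N ->
  (forall k, a k ^+ 2 + b k ^+ 2 != 0) ->
  (forall i, a i * b (succ i) - b i * a (succ i) > 0) ->
  (forall i k, k != i -> k != succ i ->
     - a k * (b i - b (succ i)) + b k * (a i - a (succ i))
       - (a i * b (succ i) - b i * a (succ i)) < 0) ->
  exists V : 'I_n -> R * R,
    (forall i, line xb yb (a i) (b i) `&` line xb yb (a (succ i)) (b (succ i))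
                   = [set V i]) /\
        boundary (Sreg xb yb a b) = \bigcup_(i in [set: 'I_n]) segment (V i) (V (succ i)) /\
        (forall i j, V i = V j -> i = j) /\
        (forall i, ~ collinear (V i) (V (succ i)) (V (succ (succ i)))) /\
        interior (Sreg xb yb a b) (xb, yb) /\
      convex_plane (Sreg xb yb a b) /\ bounded_plane (Sreg xb yb a b).
Proof.
move=> n_ge3 normal_neq0 det_gt0 corner_lt0; exists (vertex xb yb a b).
split; first exact: lines_meet_at_vertex det_gt0.
split; first exact: boundary_Sreg_polygon n_ge3 det_gt0 corner_lt0 normal_neq0.
split; first exact: vertex_inj n_ge3 det_gt0 corner_lt0.
split; first exact: vertex_not_collinear n_ge3 det_gt0 corner_lt0.
split; first exact: Sreg_center_interior.
split; first exact: convex_Sreg.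
exact: bounded_Sreg_polygon n_ge3 det_gt0 corner_lt0.
Qed.
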